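(* Let $p$ be a (positive) stochastic choice function on a finite set $X$ such that there exist three alternatives $a,b,c\in X$ with $a\not\sim_p b$, $b\not\sim_p c$ and $a\not\sim_p c$. Then $p$ satisfies Independence of Symmetric Alternatives if and only if $p$ is a nondegenerate Nested Stochastic Choice (NSC).
   Context: $X$ is a finite set of alternatives and $\mathscr{A}$ is the collection of all nonempty subsets of $X$ (menus). A stochastic choice function is a map $p:X\times\mathscr{A}\to[0,1]$ with $\sum_{a\in A}p(a,A)=1$ for every $A\in\mathscr{A}$ and $p(x,A)=0$ for $x\notin A$; throughout, $p$ is positive: $p(a,A)>0$ whenever $a\in A$. For $B\subseteq X$ write $p(B,A)=\sum_{b\in B}p(b,A)$, and write $A\cup x$ for $A\cup\{x\}$. $p$ satisfies IIA at $a,b$ if $\frac{p(a,A)}{p(b,A)}=\frac{p(a,\{a,b\})}{p(b,\{a,b\})}$ for every $A\in\mathscr{A}$ with $a,b\in A$. Alternatives $a,b$ are revealed categorically similar, written $a\sim_p b$, if $p$ satisfies IIA at $a,b$. Independence of Symmetric Alternatives (ISA): for any $A\in\mathscr{A}$, $a,b\in A$ and $x\notin A$, if either ($a\sim_p x$ and $b\sim_p x$) or ($a\not\sim_p x$ and $b\not\sim_p x$), then $\frac{p(a,A)}{p(b,A)}=\frac{p(a,A\cup x)}{p(b,A\cup x)}$. $p$ is an NSC if there exist a partition $X_1,\dots,X_K$ of $X$, a function $u:X\to\mathbb{R}_{++}$ and a function $v:\bigcup_{i=1}^K 2^{X_i}\to\mathbb{R}_+$ with $v(\emptyset)=0$ such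 that for every $A\in\mathscr{A}$ and $a\in A\cap X_i$, $p(a,A)=\frac{v(A\cap X_i)}{\sum_{j=1}^K v(A\cap X_j)}\cdot\frac{u(a)}{\sum_{b\in A\cap X_i}u(b)}$. Such an NSC (with representation $(v,u,\{X_i\}_{i=1}^K)$) is nondegenerate if there is at most one index $i\le K$ for which there exists $a\in X_i$ with $\frac{\sum_{x\in A_i}u(x)}{v(A_i)}=\frac{u(a)}{v(\{a\})}$ for every $A_i\subseteq X_i$ with $a\in A_i$. *)

(* X is a finType T; menus are nonempty {set T};
   probabilities live in an arbitrary R : realType (the reals). *)
From mathcomp Require Import all_boot all_order all_algebra.
From mathcomp Require Import reals.
Set Implicit Arguments. Unset Strict Implicit. Unset Printing Implicit Defensive.
Import Order.TTheory GRing.Theory Num.Theory.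
Local Open Scope ring_scope.

Section Defs.
Variables (R : realType) (T : finType).

Definition is_scf (p : T -> {set T} -> R) : Prop :=
  (forall A : {set T}, A != set0 -> \sum_(a in A) p a A = 1) /\
  (forall (A : {set T}) (x : T), A != set0 -> x \notin A -> p x A = 0) /\
  (forall (A : {set T}) (x : T), A != set0 -> 0 <= p x A <= 1).

Definition positive_scf (p : T -> {set T} -> R) : Prop :=
  forall (A : {set T}) (a : T), a \in A -> 0 < p a A.

Definition IIA_at (p : T -> {set T} -> R) (a b : T) : Prop :=
  forall A : {set T}, a \in A -> b \in A ->
    p a A / p b A = p a [set a; b] / p b [set a; b].

Definition cat_similar (p : T -> {set T} -> R) (a b : T) : Prop := IIA_at p a b.

Definition ISA (p : T -> {set T} -> R) : Prop :=
  forall (A : {set T}) (a b x : T), a \in A -> b \in A -> x \notin A ->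
    ((cat_similar p a x /\ cat_similar p b x) \/
     (~ cat_similar p a x /\ ~ cat_similar p b x)) ->
    p a A / p b A = p a (x |: A) / p b (x |: A).

(* (v,u,P) is an NSC representation of p; the partition X_1..X_K is the set
   of blocks P (mathcomp's [partition]: nonempty, pairwise disjoint blocks
   covering T). v is only relevant on subsets of blocks. *)
Definition NSC_rep (p : T -> {set T} -> R) (P : {set {set T}})
    (u : T -> R) (v : {set T} -> R) : Prop :=
  partition P [set: T] /\
  (forall x, 0 < u x) /\
  (forall (Xi B : {set T}), Xi \in P -> B \subset Xi -> 0 <= v B) /\
  v set0 = 0 /\
  (forall (A : {set T}) (Xi : {set T}) (a : T), A != set0 -> Xi \in P ->
     a \in A :&: Xi ->
     p a A = v (A :&: Xi) / (\sum_(Xj in P) v (A :&: Xj))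
             * (u a / \sum_(b in A :&: Xi) u b)).

Definition is_NSC (p : T -> {set T} -> R) : Prop :=
  exists P u v, NSC_rep p P u v.

Definition degenerate_block (u : T -> R) (v : {set T} -> R) (Xi : {set T})
  : Prop :=
  exists2 a, a \in Xi &
    forall Ai : {set T}, Ai \subset Xi -> a \in Ai ->
      (\sum_(x in Ai) u x) / v Ai = u a / v [set a].

Definition nondegenerate_NSC (p : T -> {set T} -> R) : Prop :=
  exists P u v, NSC_rep p P u v /\
    (forall Xi Xj, Xi \in P -> Xj \in P ->
       degenerate_block u v Xi -> degenerate_block u v Xj -> Xi = Xj).

End Defs.

From mathcomp Require Import all_boot all_order all_algebra.
From mathcomp Require Import reals.
From mathcomp Require Import ring.
Import Order.TTheory GRing.Theory Num.Theory.
Local Open Scope ring_scope.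
Set Implicit Arguments. Unset Strict Implicit. Unset Printing Implicit Defensive.

(* Under ISA, categorical similarity is an equivalence relation: if a ~ b ~ c,
   ISA lets one add b to any menu containing a and c without changing their
   odds. Its classes are the nests, and u x := p(x, X(x)) reproduces the odds
   inside a nest. For dissimilar a and b, ISA also lets one delete every
   alternative outside the nests of a and b, so the ratio of nest shares
   p(A :&: X_a, A) / p(A :&: X_b, A) only depends on A :&: X_a and A :&: X_b.
   This ratio is a positive multiplicative cocycle on nonempty subsets of
   distinct nests; as there are at least three nests it is a coboundary
   v(B_a) / v(B_b), and v is the nest value of the NSC.
   Conversely, in an NSC two similar alternatives in different nests force the
   nest of each to be degenerate. In a nondegenerate NSC the nests are thus the
   similarity classes, and adding x from a third nest leaves A :&: X_a and
   A :&: X_b unchanged. *)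

Lemma cocycle_coboundary (R : numDomainType) (U : Type) (L : eqType)
    (ok : U -> Prop) (lab : U -> L) (g : U -> U -> R) (x0 y0 z0 : U) :
  ok x0 -> ok y0 -> ok z0 ->
  lab x0 != lab y0 -> lab y0 != lab z0 -> lab x0 != lab z0 ->
  (forall x y, ok x -> ok y -> lab x != lab y -> 0 < g x y) ->
  (forall x y, ok x -> ok y -> lab x != lab y -> g x y * g y x = 1) ->
  (forall x y z, ok x -> ok y -> ok z ->
     lab x != lab y -> lab y != lab z -> lab x != lab z ->
     g x y * g y z = g x z) ->
  exists2 v : U -> R, (forall x, ok x -> 0 < v x) &
     forall x y, ok x -> ok y -> lab x != lab y -> g x y * v y = v x.
Proof.
move=> ox0 oy0 oz0 n01 n12 n02 g_gt0 g_anti g_cocycle.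
(* On the label of [x0] the potential is routed through [y0]; the third label
   [z0] is what makes the two routes agree. *)
pose v x := if lab x != lab x0 then g x x0 else g x y0 * g y0 x0.
have v_x0 x y : ok x -> ok y -> lab x = lab x0 -> lab y != lab x0 ->
    g x y * v y = v x.
  move=> ox oy ex ey; rewrite /v ey ex eqxx /=.
  have nxy0 : lab x != lab y0 by rewrite ex.
  have nxy : lab x != lab y by rewrite ex eq_sym.
  have [eyy0|nyy0] := eqVneq (lab y) (lab y0); last first.
    by rewrite -(g_cocycle x y y0) // -mulrA (g_cocycle y y0 x0) // eq_sym.
  have nyz0 : lab y != lab z0 by rewrite eyy0.
  have nxz0 : lab x != lab z0 by rewrite ex.
  have nz0x0 : lab z0 != lab x0 by rewrite eq_sym.
  have n10 : lab y0 != lab x0 by rewrite eq_sym.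
  rewrite -(g_cocycle y z0 x0) // -(g_cocycle y0 z0 x0) //.
  by rewrite mulrA (g_cocycle x y z0) // mulrA (g_cocycle x y0 z0).
exists v => [x ox|].
  rewrite /v; case: ifP => [nx0 | /negbFE/eqP ex0]; first exact: g_gt0.
  by apply: mulr_gt0; apply: g_gt0; rewrite ?ex0 // eq_sym.
move=> x y ox oy nxy.
have [ex0|nx0] := eqVneq (lab x) (lab x0).
  by apply: v_x0; rewrite // -ex0 eq_sym.
have [ey0|ny0] := eqVneq (lab y) (lab x0); last by rewrite /v nx0 ny0 g_cocycle.
by rewrite -(v_x0 y x) // mulrA g_anti // mul1r.
Qed.

Lemma sumr_gt0_mem (R : numDomainType) (T : finType) (F : T -> R)
    (B : {set T}) x :
  (forall y, y \in B -> 0 < F y) -> x \in B -> 0 < \sum_(y in B) F y.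
Proof.
move=> F_gt0 xB; rewrite (bigD1 x) //= ltr_wpDr ?F_gt0 //.
by apply: sumr_ge0 => y /andP[yB _]; apply/ltW/F_gt0.
Qed.

Section SetLemmas.
Variable T : finType.
Implicit Types (A B C D X : {set T}) (x : T).

Lemma setU_invariant (Y : Type) (f : {set T} -> Y) D A :
  (forall X x, A \subset X -> x \in D -> x \notin X -> f (x |: X) = f X) ->
  forall C, C \subset D -> f (A :|: C) = f A.
Proof.
move=> f_inv C; have [n] := ubnP #|C|; elim: n C => // n IHn C.
have [-> _ _|[x Cx]] := set_0Vmem C; first by rewrite setU0.
rewrite (cardsD1 x) Cx ltnS => ltCn sCD.
have sC'D : C :\ x \subset D := subset_trans (subsetDl C [set x]) sCD.
rewrite -(setD1K Cx) setUCA.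
have [xA'|xA'] := boolP (x \in A :|: C :\ x).
  by rewrite (setUidPr _) ?sub1set // IHn.
by rewrite f_inv ?IHn ?subsetUl ?(subsetP sCD).
Qed.

Lemma setUI_disjoint B C X :
  B \subset X -> [disjoint C & X] -> (B :|: C) :&: X = B.
Proof. by move=> /setIidPl sBX /disjoint_setI0 CX0; rewrite setIUl sBX CX0 setU0. Qed.

Lemma setU1I_notin x A X : x \notin X -> (x |: A) :&: X = A :&: X.
Proof.
by rewrite -disjoints1 => /disjoint_setI0 xX0; rewrite setIUl xX0 set0U.
Qed.

End SetLemmas.

Section Partition.
Variables (T : finType) (P : {set {set T}}).
Hypothesis partP : partition P [set: T].

Lemma mem_pblock_self x : x \in pblock P x.
Proof. by rewrite mem_pblock (cover_partition partP) inE. Qed.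

Lemma pblock_in x : pblock P x \in P.
Proof. by apply: pblock_mem; rewrite (cover_partition partP) inE. Qed.

Lemma pblock_of B x : B \in P -> x \in B -> pblock P x = B.
Proof. exact/def_pblock/(partition_trivIset partP). Qed.

Lemma pblock_same x y : y \in pblock P x -> pblock P y = pblock P x.
Proof. exact/same_pblock/(partition_trivIset partP). Qed.

Lemma pblock_disjoint x y :
  pblock P x != pblock P y -> [disjoint pblock P x & pblock P y].
Proof. by apply: (trivIsetP (partition_trivIset partP)); apply: pblock_in. Qed.

Lemma subset_pblock_disjoint (B : {set T}) x y : B \subset pblock P y ->
  pblock P x != pblock P y -> [disjoint B & pblock P x].
Proof.
by move=> sBy nxy; apply: (disjointWl sBy); apply: pblock_disjoint; rewrite eq_sym.
Qed.

Lemma partition_sum_setI (R : nmodType) (F : T -> R) (A : {set T}) :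
  \sum_(x in A) F x = \sum_(B in P) \sum_(x in A :&: B) F x.
Proof.
rewrite -(eq_bigl _ _ (fun x => andTb (x \in A))).
rewrite -(eq_bigl _ _ (fun x => congr1 (andb^~ _) (in_setT x))).
rewrite (set_partition_big_cond P partP); apply: eq_bigr => B _.
by apply: eq_bigl => x; rewrite !inE andbC.
Qed.

End Partition.

Lemma cat_similar_sym (R : realType) (T : finType) (p : T -> {set T} -> R) a b :
  cat_similar p a b -> cat_similar p b a.
Proof.
move=> sim_ab A bA aA; rewrite setUC -[LHS]invf_div -[RHS]invf_div.
by rewrite sim_ab.
Qed.

Section NestedChoice.
Variables (R : realType) (T : finType) (p : T -> {set T} -> R).
Hypothesis p_gt0 : positive_scf p.

Lemma p_neq0 a (A : {set T}) : a \in A -> p a A != 0.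
Proof. by move=> aA; rewrite gt_eqF // p_gt0. Qed.

Variables (P : {set {set T}}) (u : T -> R) (v : {set T} -> R).
Hypothesis repr_p : NSC_rep p P u v.

Let partP : partition P [set: T] := proj1 repr_p.
Let S (B : {set T}) := \sum_(b in B) u b.
Let w (B : {set T}) := v B / S B.

Lemma u_gt0 x : 0 < u x.
Proof. by case: repr_p => _ []. Qed.

Lemma S_gt0 a (B : {set T}) : a \in B -> 0 < S B.
Proof. by move=> aB; apply: sumr_gt0_mem aB => y _; apply: u_gt0. Qed.

Lemma NSC_rep_pblock a (A : {set T}) : a \in A ->
  p a A = v (A :&: pblock P a) / (\sum_(Xj in P) v (A :&: Xj))
          * (u a / S (A :&: pblock P a)).
Proof.
move=> aA; case: repr_p => _ [_ [_ [_ rep]]]; apply: rep.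
- by apply/set0Pn; exists a.
- exact: pblock_in.
- by rewrite inE aA mem_pblock_self.
Qed.

Lemma v_gt0 a (B : {set T}) : a \in B -> B \subset pblock P a -> 0 < v B.
Proof.
move=> aB sBa; rewrite lt0r.
case: repr_p => _ [_ [v_ge0 _]]; rewrite (v_ge0 (pblock P a)) ?pblock_in //.
have := p_neq0 aB; rewrite NSC_rep_pblock // (setIidPl sBa) andbT.
by apply: contra => /eqP ->; rewrite !mul0r.
Qed.

Lemma w_gt0 a (A : {set T}) : a \in A -> 0 < w (A :&: pblock P a).
Proof.
move=> aA; have aAa : a \in A :&: pblock P a by rewrite inE aA mem_pblock_self.
by rewrite divr_gt0 ?(S_gt0 aAa) ?(v_gt0 aAa) ?subsetIr.
Qed.

Lemma NSC_odds a b (A : {set T}) : a \in A -> b \in A ->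
  p a A / p b A =
  (w (A :&: pblock P a) * u a) / (w (A :&: pblock P b) * u b).
Proof.
move=> aA bA; have aAa : a \in A :&: pblock P a by rewrite inE aA mem_pblock_self.
have bAb : b \in A :&: pblock P b by rewrite inE bA mem_pblock_self.
have D_neq0 : \sum_(Xj in P) v (A :&: Xj) != 0.
  apply: contra (p_neq0 aA); rewrite NSC_rep_pblock // => /eqP ->.
  by rewrite invr0 mulr0 mul0r.
have := v_gt0 aAa (subsetIr _ _); have := v_gt0 bAb (subsetIr _ _).
have := S_gt0 aAa; have := S_gt0 bAb; have := u_gt0 a; have := u_gt0 b.
rewrite /w !NSC_rep_pblock // => ub ua Sb Sa vb va.
by field; rewrite D_neq0 !gt_eqF.
Qed.

Lemma cat_similar_same_nest a b : pblock P a = pblock P b -> cat_similar p a b.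
Proof.
move=> ab A aA bA; have aab : a \in [set a; b] by rewrite !inE eqxx.
have bab : b \in [set a; b] by rewrite !inE eqxx orbT.
rewrite !NSC_odds // -ab; have := w_gt0 aA; have := w_gt0 aab.
move: (w _) (w _) => wab wA wab_gt0 wA_gt0.
by field; rewrite !gt_eqF ?u_gt0.
Qed.

Lemma pblock_setU1I a b (B : {set T}) :
  pblock P a != pblock P b -> B \subset pblock P a ->
  (b |: B) :&: pblock P a = B /\ (b |: B) :&: pblock P b = [set b].
Proof.
move=> nab sBa; have sb : [set b] \subset pblock P b by rewrite sub1set mem_pblock_self.
split; first by rewrite setUC setUI_disjoint // (subset_pblock_disjoint partP sb).
by rewrite setUI_disjoint // (subset_pblock_disjoint partP sBa) // eq_sym.
Qed.

Lemma w_set1 a : 0 < w [set a].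
Proof.
have := w_gt0 (set11 a).
by rewrite (setIidPl _) // sub1set mem_pblock_self.
Qed.

(* IIA at [a, b] on the menu [b |: Ai] forces [w Ai = w [set a]]. *)
Lemma cat_similar_degenerate a b : cat_similar p a b ->
  pblock P a != pblock P b -> degenerate_block u v (pblock P a).
Proof.
move=> sim_ab nab; exists a => [|Ai sAia aAi]; first exact: mem_pblock_self.
have [Aia Aib] := pblock_setU1I nab sAia.
have sa : [set a] \subset pblock P a by rewrite sub1set mem_pblock_self.
have [aba abb] := pblock_setU1I nab sa.
have aA : a \in b |: Ai by rewrite inE aAi orbT.
have bA : b \in b |: Ai by rewrite !inE eqxx.
have := sim_ab _ aA bA; rewrite [[set a; b]]setUC !NSC_odds ?setU11 ?setU1r ?set11 //.
rewrite Aia Aib aba abb.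
have wub : w [set b] * u b != 0.
  by apply: mulf_neq0; apply: lt0r_neq0; [apply: w_set1 | apply: u_gt0].
have ua := lt0r_neq0 (u_gt0 a).
move/(congr1 (fun r => r * (w [set b] * u b) / u a)).
rewrite !(divfK wub) !(mulfK ua) => wAi.
by rewrite -[LHS]invf_div -/(S Ai) -/(w Ai) wAi invf_div /S big_set1.
Qed.

Lemma degenerate_cat_similar Xi Xj : Xi \in P -> Xj \in P ->
  degenerate_block u v Xi -> degenerate_block u v Xj ->
  exists2 a, a \in Xi & exists2 b, b \in Xj & cat_similar p a b.
Proof.
move=> Xi_P Xj_P [a aXi dega] [b bXj degb]; exists a => //; exists b => // A aA bA.
have w_degenerate x (B : {set T}) : x \in B ->
    (forall Ai : {set T}, Ai \subset pblock P x -> x \in Ai ->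
       (\sum_(y in Ai) u y) / v Ai = u x / v [set x]) ->
    w (B :&: pblock P x) = v [set x] / u x.
  move=> xB degx; apply: invr_inj; rewrite !invf_div; apply: degx.
    exact: subsetIr.
  by rewrite inE xB mem_pblock_self.
rewrite -(pblock_of partP Xi_P aXi) in dega.
rewrite -(pblock_of partP Xj_P bXj) in degb.
by rewrite !NSC_odds ?setU11 ?setU1r ?set11 // !w_degenerate ?setU11 ?setU1r ?set11.
Qed.

Hypothesis nondegenerate : forall Xi Xj, Xi \in P -> Xj \in P ->
  degenerate_block u v Xi -> degenerate_block u v Xj -> Xi = Xj.

Lemma cat_similar_pblock a b : cat_similar p a b -> pblock P a = pblock P b.
Proof.
move=> sim_ab; have [//|nab] := eqVneq (pblock P a) (pblock P b).
apply: nondegenerate; rewrite ?pblock_in //; first exact: cat_similar_degenerate nab.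
by apply: cat_similar_degenerate (cat_similar_sym sim_ab) _; rewrite eq_sym.
Qed.

Lemma NSC_ISA : ISA p.
Proof.
move=> A a b x aA bA xA; have axA : a \in x |: A by rewrite setU1r.
have bxA : b \in x |: A by rewrite setU1r.
case=> [[sim_ax sim_bx] | [nsim_ax nsim_bx]].
  have ab : pblock P a = pblock P b.
    by rewrite (cat_similar_pblock sim_ax) (cat_similar_pblock sim_bx).
  by rewrite (cat_similar_same_nest ab aA bA) (cat_similar_same_nest ab axA bxA).
have out_nest y : ~ cat_similar p y x -> x \notin pblock P y.
  by move=> nsim; apply/negP => /(pblock_same partP) xy; apply/nsim/cat_similar_same_nest.
by rewrite !NSC_odds // !setU1I_notin ?out_nest.
Qed.

End NestedChoice.

Section ISAChoice.
Variables (R : realType) (T : finType) (p : T -> {set T} -> R).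
Hypotheses (p_scf : is_scf p) (p_gt0 : positive_scf p) (p_ISA : ISA p).

Definition simb (a b : T) : bool :=
  [forall A : {set T}, (a \in A) ==> (b \in A) ==>
     (p a A / p b A == p a [set a; b] / p b [set a; b])].

Lemma simbP a b : reflect (cat_similar p a b) (simb a b).
Proof.
apply: (iffP forallP) => [sim A aA bA | sim A].
  by move: (sim A); rewrite aA bA => /eqP.
by apply/implyP => aA; apply/implyP => bA; apply/eqP/sim.
Qed.

Lemma cat_similar_refl a : cat_similar p a a.
Proof. by move=> A aA _; rewrite !divff // p_neq0 // setU11. Qed.

Lemma cat_similar_trans a b c :
  cat_similar p a b -> cat_similar p b c -> cat_similar p a c.
Proof.
move=> sim_ab sim_bc.
pose K := p a [set a; b] / p b [set a; b] * (p b [set b; c] / p c [set b; c]).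
have odds_abc (A : {set T}) : a \in A -> b \in A -> c \in A -> p a A / p c A = K.
  move=> aA bA cA.
  by rewrite /K -(sim_ab A) -?(sim_bc A) // mulrA divfK // p_neq0.
have odds_ac (A : {set T}) : a \in A -> c \in A -> p a A / p c A = K.
  move=> aA cA; have [bA|bA] := boolP (b \in A); first exact: odds_abc.
  rewrite (p_ISA aA cA bA); last by left; split; last exact: cat_similar_sym.
  by apply: odds_abc; rewrite ?setU11 ?setU1r.
by move=> A aA cA; rewrite !odds_ac ?setU11 ?setU1r ?set11.
Qed.

Lemma simb_equiv : equivalence_rel simb.
Proof.
move=> x y z; split; first exact/simbP/cat_similar_refl.
move=> /simbP sim_xy; apply/idP/idP => /simbP sim; apply/simbP.
  exact: cat_similar_trans (cat_similar_sym sim_xy) sim.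
exact: cat_similar_trans sim_xy sim.
Qed.

Definition sim_classes := equivalence_partition simb [set: T].

Lemma sim_classes_partition : partition sim_classes [set: T].
Proof. by apply: equivalence_partitionP => x y z _ _ _; apply: simb_equiv. Qed.

Local Notation partP := sim_classes_partition.
Local Notation cls := (pblock sim_classes).

Lemma mem_sim_class x y : (y \in cls x) = simb x y.
Proof.
by rewrite pblock_equivalence_partition ?inE // => ? ? ? _ _ _; apply: simb_equiv.
Qed.

Lemma sim_class_eq x y : (cls x == cls y) = simb x y.
Proof.
rewrite eq_pblock ?mem_sim_class ?(partition_trivIset partP) //.
by rewrite (cover_partition partP) inE.
Qed.

Definition sim_u x := p x (cls x).

Lemma sim_u_gt0 x : 0 < sim_u x.
Proof. exact/p_gt0/(mem_pblock_self partP). Qed.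

Lemma odds_similar a b (A : {set T}) : simb a b -> a \in A -> b \in A ->
  p a A / p b A = sim_u a / sim_u b.
Proof.
move=> ab aA bA; have b_cls_a : b \in cls a by rewrite mem_sim_class.
have a_cls_a := mem_pblock_self partP a.
rewrite /sim_u (pblock_same partP b_cls_a).
by move/simbP: ab => sim_ab; rewrite !sim_ab.
Qed.

(* [share A B] is the paper's p(B, A). *)
Definition share (A B : {set T}) := \sum_(y in B) p y A.

Lemma share_class a (A : {set T}) : a \in A ->
  share A (A :&: cls a) = p a A * ((\sum_(b in A :&: cls a) sim_u b) / sim_u a).
Proof.
move=> aA; rewrite mulrA /share mulr_sumr mulr_suml; apply: eq_bigr => y.
rewrite inE mem_sim_class => /andP[yA ay].
have ua := lt0r_neq0 (sim_u_gt0 a); have uy := lt0r_neq0 (sim_u_gt0 y).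
have /eqP := odds_similar ay aA yA.
by rewrite eqr_div ?(p_neq0 p_gt0 yA) // => /eqP ->; rewrite mulrC mulKf.
Qed.

Lemma odds_restrict a b (A : {set T}) : a \in A -> b \in A -> ~~ simb a b ->
  p a A / p b A =
  p a (A :&: cls a :|: A :&: cls b) / p b (A :&: cls a :|: A :&: cls b).
Proof.
move=> aA bA nab; set A' := A :&: cls a :|: A :&: cls b.
set D := ~: (cls a :|: cls b).
have aA' : a \in A' by rewrite !inE aA (mem_pblock_self partP).
have bA' : b \in A' by rewrite !inE bA (mem_pblock_self partP) orbT.
have -> : A = A' :|: A :&: D.
  apply/setP => y; rewrite !inE.
  by case: (y \in A); case: (y \in cls a); case: (y \in cls b).
apply: (@setU_invariant _ _ (fun X => p a X / p b X) D) (subsetIr _ _).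
move=> X x sAX; rewrite !inE negb_or mem_sim_class mem_sim_class => /andP[nax nbx] xX.
symmetry; apply: p_ISA (subsetP sAX a aA') (subsetP sAX b bA') xX _.
by right; split => /simbP sim; [rewrite sim in nax | rewrite sim in nbx].
Qed.

Definition odds (B1 B2 : {set T}) :=
  share (B1 :|: B2) B1 / share (B1 :|: B2) B2.

Lemma share_gt0 (A B : {set T}) x : x \in B -> B \subset A -> 0 < share A B.
Proof. by move=> xB sBA; apply: sumr_gt0_mem xB => y /(subsetP sBA)/p_gt0. Qed.

Lemma class_share_odds a b (A : {set T}) : a \in A -> b \in A -> ~~ simb a b ->
  share A (A :&: cls a) / share A (A :&: cls b) = odds (A :&: cls a) (A :&: cls b).
Proof.
move=> aA bA nab; set A' := A :&: cls a :|: A :&: cls b.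
have nab' : cls a != cls b by rewrite sim_class_eq.
have Aa : A' :&: cls a = A :&: cls a.
  by rewrite setUI_disjoint ?subsetIr // (subset_pblock_disjoint partP (subsetIr _ _)).
have Ab : A' :&: cls b = A :&: cls b.
  rewrite /A' setUC setUI_disjoint ?subsetIr //.
  by rewrite (subset_pblock_disjoint partP (subsetIr _ _)) // eq_sym.
have aA' : a \in A' by rewrite !inE aA (mem_pblock_self partP).
have bA' : b \in A' by rewrite !inE bA (mem_pblock_self partP) orbT.
have -> : odds (A :&: cls a) (A :&: cls b) =
          share A' (A' :&: cls a) / share A' (A' :&: cls b) by rewrite Aa Ab.
by rewrite !share_class // Aa Ab -!mulf_div (odds_restrict aA bA nab).
Qed.

Definition in_class (B : {set T}) : Prop := exists2 x, x \in B & B \subset cls x.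

Definition class_label (B : {set T}) : option {set T} := omap cls [pick x in B].

Lemma class_labelE (B : {set T}) x : in_class B -> x \in B ->
  class_label B = Some (cls x).
Proof.
move=> [y yB sBy] xB; rewrite /class_label.
case: pickP => [z zB | /(_ x)]; last by rewrite xB.
by rewrite /= !(pblock_same partP (subsetP sBy _ _)).
Qed.

Lemma in_class_setI a (A : {set T}) : a \in A -> in_class (A :&: cls a).
Proof. by move=> aA; exists a; rewrite ?subsetIr // inE aA (mem_pblock_self partP). Qed.

Lemma in_class1 a : in_class [set a].
Proof. by exists a; rewrite ?set11 // sub1set (mem_pblock_self partP). Qed.

Lemma odds_gt0 (B1 B2 : {set T}) x1 x2 : x1 \in B1 -> x2 \in B2 -> 0 < odds B1 B2.
Proof.
move=> x1B1 x2B2.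
by rewrite divr_gt0 ?(share_gt0 x1B1) ?(share_gt0 x2B2) ?subsetUl ?subsetUr.
Qed.

Lemma odds_inv (B1 B2 : {set T}) x1 x2 : x1 \in B1 -> x2 \in B2 ->
  odds B1 B2 * odds B2 B1 = 1.
Proof.
move=> x1B1 x2B2; rewrite /odds [B2 :|: B1]setUC mulf_div [X in _ / X]mulrC divff //.
by rewrite mulf_neq0 // lt0r_neq0 // (share_gt0 x1B1, share_gt0 x2B2) ?subsetUl ?subsetUr.
Qed.

Lemma odds_cocycle (B1 B2 B3 : {set T}) :
  in_class B1 -> in_class B2 -> in_class B3 ->
  class_label B1 != class_label B2 -> class_label B2 != class_label B3 ->
  class_label B1 != class_label B3 ->
  odds B1 B2 * odds B2 B3 = odds B1 B3.
Proof.
move=> B1c B2c B3c; case: (B1c) (B2c) (B3c) => [x1 x1B1 s1] [x2 x2B2 s2] [x3 x3B3 s3].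
rewrite (class_labelE B1c x1B1) (class_labelE B2c x2B2) (class_labelE B3c x3B3) /=.
move=> n12 n23 n13; set A := B1 :|: (B2 :|: B3).
have disj (B C : {set T}) x y z : B \subset cls y -> C \subset cls z ->
    cls x != cls y -> cls x != cls z -> [disjoint B :|: C & cls x].
  move=> sB sC nxy nxz; rewrite disjoints_subset subUset -!disjoints_subset.
  by rewrite (subset_pblock_disjoint partP sB) ?(subset_pblock_disjoint partP sC).
have A1 : A :&: cls x1 = B1 by rewrite setUI_disjoint ?(disj _ _ _ _ _ s2 s3).
have A2 : A :&: cls x2 = B2.
  by rewrite /A setUCA setUI_disjoint ?(disj _ _ _ _ _ s1 s3) // eq_sym.
have A3 : A :&: cls x3 = B3.
  by rewrite /A [B2 :|: B3]setUC setUCA setUI_disjoint ?(disj _ _ _ _ _ s1 s2) // eq_sym.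
have x1A : x1 \in A by rewrite !inE x1B1.
have x2A : x2 \in A by rewrite !inE x2B2 orbT.
have x3A : x3 \in A by rewrite !inE x3B3 !orbT.
rewrite -A1 -A2 -A3 -!class_share_odds -?sim_class_eq //.
have x2Ax2 : x2 \in A :&: cls x2 by rewrite inE x2A (mem_pblock_self partP).
by rewrite mulrA divfK // lt0r_neq0 // (share_gt0 x2Ax2) ?subsetIl.
Qed.

Lemma odds_coboundary a0 b0 c0 : ~ cat_similar p a0 b0 ->
  ~ cat_similar p b0 c0 -> ~ cat_similar p a0 c0 ->
  exists2 v0 : {set T} -> R, (forall B, in_class B -> 0 < v0 B) &
    forall B1 B2, in_class B1 -> in_class B2 ->
      class_label B1 != class_label B2 -> odds B1 B2 * v0 B2 = v0 B1.
Proof.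
move=> nab nbc nac.
have label_neq x y : ~ cat_similar p x y -> class_label [set x] != class_label [set y].
  move=> nxy; rewrite !(class_labelE (in_class1 _) (set11 _)).
  by rewrite (inj_eq (@Some_inj _)) sim_class_eq; apply/negP => /simbP.
apply: (cocycle_coboundary (in_class1 a0) (in_class1 b0) (in_class1 c0)).
1-3: exact: label_neq.
- by move=> B1 B2 [x1 x1B1 _] [x2 x2B2 _] _; apply: odds_gt0 x1B1 x2B2.
- by move=> B1 B2 [x1 x1B1 _] [x2 x2B2 _] _; apply: odds_inv x1B1 x2B2.
- exact: odds_cocycle.
Qed.

Section Coboundary.
Variable v0 : {set T} -> R.
Hypotheses (v0_gt0 : forall B, in_class B -> 0 < v0 B)
  (v0_coboundary : forall B1 B2, in_class B1 -> in_class B2 ->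
     class_label B1 != class_label B2 -> odds B1 B2 * v0 B2 = v0 B1).

Let v (B : {set T}) := if B == set0 then 0 else v0 B.

Lemma v_in_class B : in_class B -> v B = v0 B.
Proof. by case=> x xB _; rewrite /v ifF //; apply/negbTE/set0Pn; exists x. Qed.

Lemma share_cross a (A Xj : {set T}) : a \in A -> Xj \in sim_classes ->
  share A (A :&: cls a) * v (A :&: Xj) = share A (A :&: Xj) * v (A :&: cls a).
Proof.
move=> aA Xj_cls; have [->|[b]] := set_0Vmem (A :&: Xj).
  by rewrite /v eqxx /share big_set0 mulr0 mul0r.
rewrite inE => /andP[bA bXj]; rewrite -(pblock_of partP Xj_cls bXj).
have [->|nab] := eqVneq (cls a) (cls b); first by [].
have aAa : a \in A :&: cls a by rewrite inE aA (mem_pblock_self partP).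
have bAb : b \in A :&: cls b by rewrite inE bA (mem_pblock_self partP).
have := v0_coboundary (in_class_setI aA) (in_class_setI bA).
rewrite (class_labelE (in_class_setI aA) aAa) (class_labelE (in_class_setI bA) bAb).
rewrite (inj_eq (@Some_inj _)) => /(_ nab).
rewrite -class_share_odds -?sim_class_eq //.
rewrite (v_in_class (in_class_setI aA)) (v_in_class (in_class_setI bA)) => <-.
have := share_gt0 bAb (subsetIl _ _); move: (share _ _) (share _ _) => sb sa sb_gt0.
by field; rewrite lt0r_neq0.
Qed.

Lemma share_class_coboundary a (A : {set T}) : a \in A ->
  share A (A :&: cls a) * \sum_(Xj in sim_classes) v (A :&: Xj) = v (A :&: cls a).
Proof.
move=> aA; have A_neq0 : A != set0 by apply/set0Pn; exists a.
have shares1 : \sum_(Xj in sim_classes) share A (A :&: Xj) = 1.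
  by rewrite /share -(partition_sum_setI partP (p^~ A)); case: p_scf => ->.
rewrite mulr_sumr -[RHS]mul1r -shares1 mulr_suml.
by apply: eq_bigr => Xj Xj_cls; apply: share_cross.
Qed.

Lemma coboundary_NSC_rep : exists v : {set T} -> R, NSC_rep p sim_classes sim_u v.
Proof.
exists v; split; first exact: partP.
split; first exact: sim_u_gt0.
split.
  move=> Xi B Xi_cls sBXi; have [-> | [x xB]] := set_0Vmem B; first by rewrite /v eqxx.
  have Bc : in_class B by exists x; rewrite // (pblock_of partP Xi_cls) ?(subsetP sBXi).
  by rewrite v_in_class // ltW // v0_gt0.
split; first by rewrite /v eqxx.
move=> A Xi a _ Xi_cls; rewrite inE => /andP[aA aXi].
rewrite -(pblock_of partP Xi_cls aXi).
have := share_class_coboundary aA; rewrite share_class //.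
have aAa : a \in A :&: cls a by rewrite inE aA (mem_pblock_self partP).
have := v0_gt0 (in_class_setI aA); rewrite -(v_in_class (in_class_setI aA)).
have := sumr_gt0_mem (fun y _ => sim_u_gt0 y) aAa; have := sim_u_gt0 a.
move: (\sum_(b in _) _) (\sum_(Xj in _) _) (v _) => Su Sv va ua Su_gt0 va_gt0 eq_va.
have Sv_neq0 : Sv != 0.
  by apply: contraTneq va_gt0 => Sv0; rewrite -eq_va Sv0 mulr0 ltxx.
by rewrite -eq_va; field; rewrite Sv_neq0 !lt0r_neq0.
Qed.

End Coboundary.

Lemma ISA_nondegenerate_NSC a0 b0 c0 : ~ cat_similar p a0 b0 ->
  ~ cat_similar p b0 c0 -> ~ cat_similar p a0 c0 -> nondegenerate_NSC p.
Proof.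
move=> nab nbc nac; have [v0 v0_gt0 v0_cob] := odds_coboundary nab nbc nac.
have [v rep] := coboundary_NSC_rep v0_gt0 v0_cob.
exists sim_classes, sim_u, v; split; first exact: rep.
move=> Xi Xj Xi_cls Xj_cls deg_i deg_j.
have [a aXi [b bXj sim_ab]] := degenerate_cat_similar p_gt0 rep Xi_cls Xj_cls deg_i deg_j.
rewrite -(pblock_of partP Xi_cls aXi) -(pblock_of partP Xj_cls bXj).
by apply/eqP; rewrite sim_class_eq; apply/simbP.
Qed.

End ISAChoice.

Theorem theorem1 (R : realType) (T : finType) (p : T -> {set T} -> R) :
  is_scf p -> positive_scf p ->
  (exists a b c : T, ~ cat_similar p a b /\ ~ cat_similar p b c /\
                     ~ cat_similar p a c) ->
  (ISA p <-> nondegenerate_NSC p).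
Proof.
move=> p_scf p_gt0 [a [b [c [nab [nbc nac]]]]]; split => [p_ISA | ].
  exact: ISA_nondegenerate_NSC p_scf p_gt0 p_ISA a b c nab nbc nac.
by case=> P [u [v [rep nondeg]]]; exact: (NSC_ISA p_gt0 rep nondeg).
Qed.
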